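(* There exist a finite semidistributive extremal lattice $L$ and a subset $X$ of its set of join-irreducible elements such that the subcomplex of the canonical join complex of $L$ induced on $X$ is not (isomorphic to) the canonical join complex of any finite semidistributive lattice.
   Context: A lattice is semidistributive if $x\vee y=x\vee z$ implies $x\vee(y\wedge z)=x\vee y$ and $x\wedge y=x\wedge z$ implies $x\wedge(y\vee z)=x\wedge y$. In a finite semidistributive lattice, for each cover $b\lessdot c$ the set $\{z\mid z\le c,\ z\not\le b\}$ has a minimum $\gamma_J(b\lessdot c)$, which is join-irreducible. The canonical join complex of $L$ is the simplicial complex on the set of join-irreducible elements whose faces are the sets $D(x)=\{\gamma_J(y\lessdot x)\mid y\lessdot x\}$, $x\in L$. The induced subcomplex on $X$ consists of the faces contained in $X$. A lattice is extremal if its length (maximum number of elements of a chain minus one) equals both its number of join-irreducible elements and its number of meet-irreducible elements. *)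

From HB Require Import structures.
From mathcomp Require Import all_boot all_order.
Set Implicit Arguments. Unset Strict Implicit. Unset Printing Implicit Defensive.
Import Order.Theory.
Local Open Scope order_scope.

Section LatticeDefs.
Context {d : Order.disp_t} (L : finTBLatticeType d).

Definition semidistributive : Prop :=
  (forall x y z : L, x `|` y = x `|` z -> x `|` (y `&` z) = x `|` y) /\
  (forall x y z : L, x `&` y = x `&` z -> x `&` (y `|` z) = x `&` y).

Definition covers (b c : L) : bool :=
  (b < c) && [forall z : L, ~~ ((b < z) && (z < c))].

Definition is_gammaJ (b c j : L) : bool :=
  [&& j <= c, ~~ (j <= b) &
      [forall z : L, ((z <= c) && ~~ (z <= b)) ==> (j <= z)]].

Definition join_irr (j : L) : bool :=
  (j != \bot) && [forall a : L, forall b : L, (j == a `|` b) ==> ((j == a) || (j == b))].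

Definition meet_irr (m : L) : bool :=
  (m != \top) && [forall a : L, forall b : L, (m == a `&` b) ==> ((m == a) || (m == b))].

Definition JI : {set L} := [set j : L | join_irr j].
Definition MI : {set L} := [set m : L | meet_irr m].

Definition canD (x : L) : {set L} :=
  [set j : L | [exists y : L, covers y x && is_gammaJ y x j]].

Definition canonical_join_complex : {set {set L}} := [set canD x | x : L].

Definition induced_subcomplex (X : {set L}) : {set {set L}} :=
  [set A in canonical_join_complex | A \subset X].

Definition is_chain (C : {set L}) : bool :=
  [forall x in C, forall y in C, (x <= y) || (y <= x)].

Definition lattice_length : nat := ((\max_(C : {set L} | is_chain C) #|C|)%N).-1.

Definition extremal : Prop :=
  lattice_length = #|JI| /\ lattice_length = #|MI|.

End LatticeDefs.

(* simplicial complexes given by their faces; isomorphism = bijection of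
   vertex sets inducing a bijection of faces *)
Definition cx_vertices (T : finType) (K : {set {set T}}) : {set T} :=
  \bigcup_(A in K) A.

Definition complex_iso (T T' : finType) (K : {set {set T}}) (K' : {set {set T'}}) : Prop :=
  exists f : T -> T',
    [/\ {in cx_vertices K &, injective f},
        f @: cx_vertices K = cx_vertices K' &
        forall A : {set T}, A \subset cx_vertices K -> (A \in K) = (f @: A \in K')].

From HB Require Import structures.
From mathcomp Require Import all_boot all_order zmodp.
Set Implicit Arguments. Unset Strict Implicit. Unset Printing Implicit Defensive.
Import Order.Theory.

(* The witness L49 is the lattice of the 49 closed sets of a closure system on
   ten points; its join-irreducibles are the closures of the points, and X
   consists of nine of them.
   In a finite semidistributive lattice let kappa j be the largest element
   above the lower cover of the join-irreducible j but not above j.  Two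
   distinct join-irreducibles a, b form a face of the canonical join complex
   iff a <= kappa b and b <= kappa a; when this fails, some join-irreducible w
   satisfies w <= a and kappa b <= kappa w, or the mirror statement; and v < u
   always excludes kappa u <= kappa v.  Pulling these facts back along an
   isomorphism from the subcomplex induced on X to the canonical join complex
   of a semidistributive L' yields two preorders on the nine vertices subject
   to constraints fixed by the non-faces of the complex.  A DPLL refutation,
   checked by reflection, shows that no such pair exists. *)

(* Read P u v as j v <= j u and Q u v as kappa (j v) <= kappa (j u) for an
   enumeration j of the join-irreducibles; N u v says that {j u, j v} is not a
   face. *)
Record compatible_orders (V : finType) (N P Q : rel V) : Prop := {
  P_refl : reflexive P;
  P_trans : transitive P;
  Q_refl : reflexive Q;
  Q_trans : transitive Q;
  nonface_antisym : forall u v, N u v -> ~~ (P u v && P v u);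
  nonface_kappa : forall u v, N u v -> ~~ (P u v && Q v u);
  nonface_factor : forall u v, N u v ->
    (exists w, P u w && Q w v) \/ (exists w, P v w && Q w u);
  face_nofactor : forall u v w, u != v -> ~~ N u v -> ~~ (P u w && Q w v) }.

(** * Canonical join complexes of finite lattices *)

Section FiniteLattice.
Local Open Scope order_scope.
Context {d : Order.disp_t} (L : finTBLatticeType d).
Implicit Types a b g j k t u v w x y z : L.

Lemma join_irrP j :
  reflect (j != \bot /\ forall a b, j = a `|` b -> j = a \/ j = b) (join_irr j).
Proof.
apply: (iffP andP) => [[j0 /forallP jP]|[j0 jP]]; split=> //.
  move=> a b ej; have /forallP/(_ b)/implyP := jP a.
  by move=> /(_ (introT eqP ej))/orP[]/eqP; [left|right].
apply/forallP => a; apply/forallP => b; apply/implyP => /eqP/jP[] <-.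
  by rewrite eqxx.
by rewrite eqxx orbT.
Qed.

Lemma lt_meetl a b : ~~ (a <= b) -> a `&` b < a.
Proof. by move=> nle; rewrite lt_neqAle leIl andbT; apply: contraNneq nle => <-; apply: leIr. Qed.

Definition down_card x := #|[set t | t <= x]|.

Lemma down_card_lt x y : x < y -> (down_card x < down_card y)%N.
Proof.
move=> lt_xy; apply: proper_card; rewrite properE; apply/andP; split.
  by apply/subsetP => t; rewrite !inE => /le_trans; apply; apply: ltW.
by apply/subsetPn; exists y; rewrite !inE ?lexx // lt_geF.
Qed.

Lemma coversP y x :
  reflect (y < x /\ forall z, y < z -> z < x -> False) (covers y x).
Proof.
apply: (iffP andP) => [[lt_yx /forallP yx]|[lt_yx yx]]; split=> //.
  by move=> z lt_yz lt_zx; have := yx z; rewrite lt_yz lt_zx.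
by apply/forallP => z; apply/negP => /andP[] /yx; apply.
Qed.

Lemma covers_lt y x : covers y x -> y < x.
Proof. by case/coversP. Qed.

Lemma covers_interval y x z : covers y x -> y <= z -> z <= x -> z = y \/ z = x.
Proof.
case/coversP => _ yx le_yz le_zx.
have [->|ne_zy] := eqVneq z y; first by left.
have [->|ne_zx] := eqVneq z x; first by right.
by case: (yx z); rewrite lt_neqAle ?le_yz ?le_zx ?andbT // eq_sym.
Qed.

Lemma covers_join y x z : covers y x -> z <= x -> ~~ (z <= y) -> y `|` z = x.
Proof.
move=> cyx le_zx nle_zy.
have le_yzx : y `|` z <= x by rewrite leUx le_zx ltW // covers_lt.
have [/join_idPl le_zy|//] := covers_interval cyx (leUl y z) le_yzx.
by rewrite le_zy in nle_zy.
Qed.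

Lemma exists_lower_cover z x : z < x -> exists2 y, covers y x & z <= y.
Proof.
move=> lt_zx; have Pz : (z <= z) && (z < x) by rewrite lexx lt_zx.
case: (@arg_maxnP _ z (fun t => (z <= t) && (t < x)) down_card Pz) => y /andP[le_zy lt_yx] ymax.
exists y => //; apply/coversP; split=> // t lt_yt lt_tx.
have := ymax t; rewrite (le_trans le_zy (ltW lt_yt)) lt_tx => /(_ isT).
by rewrite /= leqNgt down_card_lt.
Qed.

Lemma gammaP y x g :
  reflect [/\ g <= x, ~~ (g <= y) & forall z, z <= x -> ~~ (z <= y) -> g <= z]
          (is_gammaJ y x g).
Proof.
apply: (iffP and3P) => [[gx gy /forallP gmin]|[gx gy gmin]]; split=> //.
  by move=> z zx zy; have := gmin z; rewrite zx zy.
by apply/forallP => z; apply/implyP => /andP[] /gmin; apply.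
Qed.

Lemma gamma_uniq y x g1 g2 : is_gammaJ y x g1 -> is_gammaJ y x g2 -> g1 = g2.
Proof.
case/gammaP => g1x g1y g1min /gammaP[g2x g2y g2min].
by apply/le_anti; rewrite g1min // g2min.
Qed.

Lemma gamma_join_irr y x g : is_gammaJ y x g -> join_irr g.
Proof.
case/gammaP => gx gy gmin; apply/join_irrP; split.
  by apply: contraNneq gy => ->; apply: le0x.
move=> a b eg; have le_ag : a <= g by rewrite eg leUl.
have le_bg : b <= g by rewrite eg leUr.
have [ay|nay] := boolP (a <= y); last first.
  by left; apply/le_anti; rewrite le_ag gmin // (le_trans le_ag gx).
have [by_|nby] := boolP (b <= y); first by move: gy; rewrite eg leUx ay by_.
by right; apply/le_anti; rewrite le_bg gmin // (le_trans le_bg gx).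
Qed.

Lemma canDP x j : reflect (exists2 y, covers y x & is_gammaJ y x j) (j \in canD x).
Proof.
rewrite inE; apply: (iffP existsP) => [[y /andP[]]|[y cyx gj]]; first by exists y.
by exists y; rewrite cyx.
Qed.

Definition lower_cover j : L := \join_(z | z < j) z.

Lemma le_lower_cover z j : z < j -> z <= lower_cover j.
Proof. exact: (@joins_sup _ _ _ z (fun t => t < j)). Qed.

Lemma lower_cover_le j : lower_cover j <= j.
Proof. by apply/joinsP => z /ltW. Qed.

Lemma lower_cover_lt j : join_irr j -> lower_cover j < j.
Proof.
case/join_irrP => j0 jP; rewrite /lower_cover.
elim/big_ind: _ => [|a b lt_aj lt_bj|//]; first by rewrite lt0x.
rewrite lt_neqAle leUx !ltW //= andbT.
by apply/eqP => /esym/jP[] ej; [move: lt_aj | move: lt_bj]; rewrite -ej ltxx.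
Qed.

Lemma covers_lower_cover j : join_irr j -> covers (lower_cover j) j.
Proof.
move=> jj; apply/coversP; split=> [|z lt_z lt_zj]; first exact: lower_cover_lt.
by have := lt_le_trans lt_z (le_lower_cover lt_zj); rewrite ltxx.
Qed.

Lemma covers_join_irr j y : join_irr j -> covers y j -> y = lower_cover j.
Proof.
move=> jj cyj; have le_y := le_lower_cover (covers_lt cyj).
have [//|ej] := covers_interval cyj le_y (lower_cover_le j).
by have := lower_cover_lt jj; rewrite ej ltxx.
Qed.

Lemma gamma_lower_cover j : join_irr j -> is_gammaJ (lower_cover j) j j.
Proof.
move=> jj; apply/gammaP; split=> [||z le_zj nle_z]; first exact: lexx.
  by rewrite lt_geF // lower_cover_lt.
have [->//|ne_zj] := eqVneq z j.
by move: nle_z; rewrite le_lower_cover // lt_neqAle ne_zj le_zj.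
Qed.

Lemma lower_cover_gamma_le y x g : is_gammaJ y x g -> lower_cover g <= y.
Proof.
move=> gP; have := gP; case/gammaP => gx _ gmin.
apply: contraTT (lower_cover_lt (gamma_join_irr gP)) => nle.
by rewrite le_gtF // gmin // (le_trans (lower_cover_le g) gx).
Qed.

Lemma canD_join_irr j : join_irr j -> canD j = [set j].
Proof.
move=> jj; apply/setP => k; rewrite inE; apply/canDP/eqP => [[y cyj gk]|->].
  by rewrite (covers_join_irr jj cyj) in gk; apply: gamma_uniq gk (gamma_lower_cover jj).
by exists (lower_cover j); rewrite ?covers_lower_cover ?gamma_lower_cover.
Qed.

Lemma join_irr_face j : join_irr j -> [set j] \in canonical_join_complex L.
Proof. by move=> jj; rewrite -canD_join_irr //; apply: imset_f. Qed.

Lemma canonical_join_complex_vertices : cx_vertices (canonical_join_complex L) = JI L.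
Proof.
apply/setP => j; rewrite inE; apply/bigcupP/idP => [[_ /imsetP[x _ ->] /canDP[y _]]|jj].
  exact: gamma_join_irr.
by exists [set j]; rewrite ?join_irr_face ?inE.
Qed.

Lemma induced_subcomplex_vertices (X : {set L}) :
  X \subset JI L -> cx_vertices (induced_subcomplex X) = X.
Proof.
move=> /subsetP XJ; apply/setP => x; apply/bigcupP/idP => [[A]|xX].
  by rewrite inE => /andP[_ /subsetP AX] /AX.
exists [set x]; last by rewrite inE.
by rewrite inE sub1set xX join_irr_face // -[join_irr x]inE XJ.
Qed.

Lemma join_irr_witness x y : ~~ (y <= x) ->
  exists j, [/\ join_irr j, j <= y, ~~ (j <= x) & lower_cover j <= x].
Proof.
move=> nle_yx; pose S t := (t <= y) && ~~ (t <= x).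
have Sy : S y by rewrite /S lexx.
case: (@arg_minnP _ y S down_card Sy) => w /andP[le_wy nle_wx] wmin.
have below t : t < w -> t <= x.
  move=> lt_tw; apply: contraTT (down_card_lt lt_tw) => nle_tx.
  by rewrite -leqNgt wmin // /S (le_trans (ltW lt_tw) le_wy).
have jw : join_irr w.
  apply/join_irrP; split=> [|a b ew].
    by apply: contraNneq nle_wx => ->; apply: le0x.
  have [->|ne_wa] := eqVneq w a; first by left.
  have [->|ne_wb] := eqVneq w b; first by right.
  move/negP: nle_wx; case; rewrite ew leUx !below //.
    by rewrite lt_neqAle eq_sym ne_wb ew leUr.
  by rewrite lt_neqAle eq_sym ne_wa ew leUl.
by exists w; split=> //; apply/joinsP => t /below.
Qed.

Lemma lattice_length_le_card_JI : (lattice_length L <= #|JI L|)%N.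
Proof.
rewrite /lattice_length -subn1 leq_subLR add1n; apply/bigmax_leqP => C /forallP Cch.
pose g x := #|JI L :&: [set j | j <= x]|.
have g_lt x y : x < y -> (g x < g y)%N.
  move=> lt_xy; apply: proper_card; rewrite properE setIS /=; last first.
    by apply/subsetP => t; rewrite !inE => /le_trans; apply; apply: ltW.
  have [j [jj le_jy nle_jx _]] := join_irr_witness (negbT (lt_geF lt_xy)).
  by apply/subsetPn; exists j; rewrite !inE ?jj ?le_jy.
have g_inj : {in C &, injective g}.
  move=> x y xC yC; apply: contra_eq => ne_xy.
  have /implyP/(_ xC)/forallP/(_ y)/implyP/(_ yC)/orP[le_xy|le_yx] := Cch x.
    by rewrite ltn_eqF // g_lt // lt_neqAle ne_xy.
  by rewrite gtn_eqF // g_lt // lt_neqAle eq_sym ne_xy.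
rewrite cardE -(size_map g) -(size_iota 0 #|JI L|.+1).
apply: uniq_leq_size.
  by rewrite map_inj_in_uniq ?enum_uniq // => x y; rewrite !mem_enum; apply: g_inj.
by move=> _ /mapP[x _ ->]; rewrite mem_iota ltnS subset_leq_card // subsetIl.
Qed.

Lemma chain_card_le_length (C : {set L}) : is_chain C -> (#|C|.-1 <= lattice_length L)%N.
Proof. by move=> Cch; rewrite /lattice_length -!subn1 leq_sub2r // (leq_bigmax_cond _ Cch). Qed.

Definition kappa j : L := \join_(z | (lower_cover j <= z) && ~~ (j <= z)) z.

Lemma le_kappa j z : lower_cover j <= z -> ~~ (j <= z) -> z <= kappa j.
Proof.
move=> le_z nle_jz.
by apply: (@joins_sup _ _ _ z (fun t => (lower_cover j <= t) && ~~ (j <= t))); rewrite le_z.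
Qed.

Lemma lower_cover_le_kappa j : join_irr j -> lower_cover j <= kappa j.
Proof. by move=> jj; apply: le_kappa => //; rewrite lt_geF // lower_cover_lt. Qed.

Lemma gamma_cover_le_kappa y x g : covers y x -> is_gammaJ y x g -> y <= kappa g.
Proof. by move=> _ gP; apply: le_kappa; [apply: lower_cover_gamma_le gP | case/gammaP: gP]. Qed.

Lemma nle_kappa_factor a b : ~~ (a <= kappa b) ->
  exists w, [/\ join_irr w, w <= a & kappa b <= kappa w].
Proof.
by case/join_irr_witness => w [jw le_wa nle_w le_lw]; exists w; split=> //; apply: le_kappa.
Qed.

End FiniteLattice.

Section Semidistributive.
Local Open Scope order_scope.
Context {d : Order.disp_t} (L : finTBLatticeType d).
Hypothesis SD : semidistributive L.
Implicit Types a b g j k t w x y z : L.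

Lemma kappa_nge j : join_irr j -> ~~ (j <= kappa j).
Proof.
move=> jj; have lt_lj := lower_cover_lt jj.
have meet_lower z : lower_cover j <= z -> ~~ (j <= z) -> j `&` z = lower_cover j.
  move=> le_lz nle_jz; apply/le_anti; rewrite lexI lower_cover_le le_lz /= andbT.
  by apply/le_lower_cover/lt_meetl.
have : j `&` (lower_cover j `|` kappa j) = lower_cover j.
  rewrite /kappa; elim/big_rec: _ => [|z t /andP[le_lz nle_jz] IH].
    by rewrite joinx0; apply/meet_idPr; apply: lower_cover_le.
  by rewrite joinCA -(meet_lower z le_lz nle_jz) in IH *; apply: SD.2; rewrite IH.
rewrite (join_r (lower_cover_le_kappa jj)) => ejk; apply/negP => /meet_idPl.
by rewrite ejk => elj; rewrite elj ltxx in lt_lj.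
Qed.

Lemma le_kappaE a b : join_irr b -> (a <= kappa b) = ~~ (b <= a `|` lower_cover b).
Proof.
move=> jb; apply/idP/idP => [le_ak|nle].
  apply: contra (kappa_nge jb) => /le_trans; apply.
  by rewrite leUx le_ak lower_cover_le_kappa.
by apply: le_trans (leUl a _) (le_kappa (leUr _ _) nle).
Qed.

Lemma kappa_lt_nle (u v : L) : join_irr u -> join_irr v -> v < u -> ~~ (kappa u <= kappa v).
Proof.
move=> ju jv lt_vu; apply: contra (kappa_nge jv) => le_k.
exact: le_trans (le_lower_cover lt_vu) (le_trans (lower_cover_le_kappa ju) le_k).
Qed.

Lemma gamma_exists y x : covers y x -> exists g, is_gammaJ y x g.
Proof.
move=> cyx; have lt_yx := covers_lt cyx.
pose S z := (z <= x) && ~~ (z <= y).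
exists (x `&` \meet_(z | S z) z); apply/gammaP; split=> [||z le_zx nle_zy]; first exact: leIl.
  have : y `|` (x `&` \meet_(z | S z) z) = x.
    elim/big_rec: _ => [|z t /andP[le_zx nle_zy] IH]; first by rewrite meetx1 join_r // ltW.
    have e := covers_join cyx le_zx nle_zy.
    by rewrite meetCA SD.1 ?e // e IH.
  by move=> e; apply/negP => /join_idPl; rewrite e => exy; rewrite exy ltxx in lt_yx.
by apply: le_trans (leIr _ _) (@meets_inf _ _ _ z S _ _); rewrite /S le_zx.
Qed.

Lemma gamma_le_cover y y' x k : covers y x -> covers y' x -> y != y' ->
  is_gammaJ y' x k -> k <= y.
Proof.
move=> cyx cy'x ne_yy' gk; have := gk; case/gammaP => le_kx nle_ky' _.
apply: contraT => nle_ky; have lt_y'x := covers_lt cy'x.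
have nle_yy' : ~~ (y <= y').
  apply: contra ne_yy' => le_yy'.
  have [->//|eyx] := covers_interval cyx le_yy' (ltW lt_y'x).
  by rewrite eyx ltxx in lt_y'x.
have ek := covers_join cy'x le_kx nle_ky'.
have ey := covers_join cy'x (ltW (covers_lt cyx)) nle_yy'.
have e : y' `|` (k `&` y) = x by rewrite SD.1 ek // ey.
have le_ky : k `&` y <= lower_cover k.
  exact/le_lower_cover/lt_meetl.
move: e; rewrite (join_l (le_trans le_ky (lower_cover_gamma_le gk))) => ey'.
by rewrite ey' ltxx in lt_y'x.
Qed.

Lemma face_le_kappa a b : a != b -> [set a; b] \in canonical_join_complex L -> a <= kappa b.
Proof.
move=> ne_ab /imsetP[x _ eD].
have /canDP[ya cya ga] : a \in canD x by rewrite -eD !inE eqxx.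
have /canDP[yb cyb gb] : b \in canD x by rewrite -eD !inE eqxx orbT.
have ne_y : yb != ya.
  by apply: contraNneq ne_ab => eyb; rewrite eyb in gb; apply/eqP/(gamma_uniq ga gb).
exact: le_trans (gamma_le_cover cyb cya ne_y ga) (gamma_cover_le_kappa cyb gb).
Qed.

Lemma labelled_cover_of_join a b : join_irr a -> b <= kappa a ->
  exists y, [/\ covers y (a `|` b), is_gammaJ y (a `|` b) a & b <= y].
Proof.
move=> ja le_bk; set x := a `|` b.
have lt_x : lower_cover a `|` b < x.
  rewrite lt_neqAle leUx (le_trans (lower_cover_le a) (leUl a b)) leUr /= andbT.
  apply: contraNneq (kappa_nge ja) => ex; apply: le_trans (leUl a b) _.
  by rewrite -/x -ex leUx lower_cover_le_kappa.
have [y cyx] := exists_lower_cover lt_x; rewrite leUx => /andP[le_ly le_by].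
have [g gP] := gamma_exists cyx; have := gP; case/gammaP => _ nle_gy gmin.
have nle_ay : ~~ (a <= y).
  by apply: contraTN (covers_lt cyx) => le_ay; rewrite le_gtF // leUx le_ay.
have le_ga : g <= a by apply: gmin nle_ay; apply: leUl.
have [ega|ne_ga] := eqVneq g a; first by exists y; rewrite -ega.
by rewrite (le_trans (le_lower_cover _) le_ly) // lt_neqAle ne_ga in nle_gy.
Qed.

Lemma canonical_join_pairE a b : join_irr a -> join_irr b -> a != b ->
  ([set a; b] \in canonical_join_complex L) = (a <= kappa b) && (b <= kappa a).
Proof.
move=> ja jb ne_ab; apply/idP/andP => [F|[le_ak le_bk]].
  by rewrite !face_le_kappa // 1?eq_sym // setUC.
have [ya [cya ga le_bya]] := labelled_cover_of_join ja le_bk.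
have [yb [cyb gb le_ayb]] := labelled_cover_of_join jb le_ak.
rewrite joinC in cyb gb.
suff -> : [set a; b] = canD (a `|` b) by apply: imset_f.
apply/setP => k; rewrite in_set2; apply/idP/canDP => [/orP[]/eqP->|[y cy gk]].
- by exists ya.
- by exists yb.
have [eya|ne_ya] := eqVneq y ya; first by rewrite eya in gk; rewrite (gamma_uniq gk ga) eqxx.
have [eyb|ne_yb] := eqVneq y yb; first by rewrite eyb in gk; rewrite (gamma_uniq gk gb) eqxx orbT.
have := covers_lt cy; rewrite le_gtF // leUx.
by rewrite (gamma_le_cover cy cya ne_ya ga) (gamma_le_cover cy cyb ne_yb gb).
Qed.

Lemma canonical_join_pair_coversE a b ya yb : join_irr a -> join_irr b -> a != b ->
  covers ya a -> covers yb b ->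
  ([set a; b] \in canonical_join_complex L) = ~~ (b <= a `|` yb) && ~~ (a <= b `|` ya).
Proof.
move=> ja jb ne_ab cya cyb.
rewrite canonical_join_pairE // !le_kappaE //.
by rewrite -(covers_join_irr ja cya) -(covers_join_irr jb cyb).
Qed.

Lemma kappa_compatible_orders (V : finType) (N : rel V) (j : V -> L) :
  irreflexive N -> injective j -> (forall u : V, join_irr (j u)) ->
  (forall w, join_irr w -> exists u : V, w = j u) ->
  (forall u v, u != v -> ([set j u; j v] \in canonical_join_complex L) = ~~ N u v) ->
  compatible_orders N (fun u v => j v <= j u) (fun u v => kappa (j v) <= kappa (j u)).
Proof.
move=> Nirr j_inj jJ j_onto j_face.
have neq_N u v : N u v -> u != v by apply: contraTneq => ->; rewrite Nirr.
have ne_j u v : u != v -> j u != j v by rewrite (inj_eq j_inj).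
split=> [u|v u w|u|v u w|u v Nuv|u v Nuv|u v Nuv|u v w ne_uv nN]; rewrite ?lexx //.
- by move=> le1 le2; apply: le_trans le2 le1.
- by move=> le1 le2; apply: le_trans le2 le1.
- apply/negP => /andP[le_vu le_uv]; move/eqP: (ne_j u v (neq_N u v Nuv)); apply.
  by apply/le_anti; rewrite le_uv le_vu.
- apply/negP => /andP[le_vu le_k].
  have lt_vu : j v < j u by rewrite lt_neqAle eq_sym ne_j ?neq_N.
  by move: (kappa_lt_nle (jJ u) (jJ v) lt_vu); rewrite le_k.
- have := j_face u v (neq_N u v Nuv).
  rewrite Nuv (canonical_join_pairE (jJ u) (jJ v)) ?ne_j ?neq_N //= => /negbT.
  rewrite negb_and => /orP[] /nle_kappa_factor[w' [jw' le_w' le_k]];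
    have [w ew'] := j_onto w' jw'; rewrite ew' in le_w' le_k.
    by left; exists w; rewrite le_w' le_k.
  by right; exists w; rewrite le_w' le_k.
- apply/negP => /andP[le_wu le_k]; move/negP: (kappa_nge (jJ w)); apply.
  have F : [set j u; j v] \in canonical_join_complex L by rewrite j_face.
  exact: le_trans le_wu (le_trans (face_le_kappa (ne_j u v ne_uv) F) le_k).
Qed.

End Semidistributive.

(** * A propositional certificate *)

Section Refutation.
Variable A : eqType.

Definition literal := (A * bool)%type.
Definition clause := seq literal.
Definition cnf := seq clause.
Implicit Types (s : A -> bool) (l : literal) (c : clause) (f : cnf).

Definition lit_sat s l := s l.1 == l.2.
Definition clause_sat s c := has (lit_sat s) c.
Definition cnf_sat s f := all (clause_sat s) f.
Definition lit_neg l : literal := (l.1, ~~ l.2).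

Definition assign l f : cnf := [seq [seq k <- c | k != lit_neg l] | c <- f & l \notin c].

Definition unit_lit f : option literal :=
  if [seq c <- f | size c == 1] is [:: l] :: _ then Some l else None.

Fixpoint refute n f : bool :=
  if n is n'.+1 then
    if has (@nilp _) f then true else
    if unit_lit f is Some l then refute n' (assign l f) else
    if f is (l :: _) :: _ then
      if refute n' (assign l f) then refute n' (assign (lit_neg l) f) else false
    else false
  else false.

Lemma lit_sat_true s a : lit_sat s (a, true) = s a.
Proof. by rewrite /lit_sat /= eqb_id. Qed.

Lemma lit_sat_false s a : lit_sat s (a, false) = ~~ s a.
Proof. by rewrite /lit_sat /= eqbF_neg. Qed.

Lemma lit_sat_neg s l : lit_sat s (lit_neg l) = ~~ lit_sat s l.
Proof. by case: l => a [] /=; rewrite /lit_sat /=; case: (s a). Qed.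

Lemma assign_sat s l f : lit_sat s l -> cnf_sat s f -> cnf_sat s (assign l f).
Proof.
move=> sl /allP sf; apply/allP => c' /mapP[c]; rewrite mem_filter => /andP[_ cf] ->.
have /hasP[k kc sk] := sf c cf; apply/hasP; exists k => //.
by rewrite mem_filter kc andbT; apply: contraTneq sk => ->; rewrite lit_sat_neg sl.
Qed.

Lemma unit_lit_sat s l f : unit_lit f = Some l -> cnf_sat s f -> lit_sat s l.
Proof.
rewrite /unit_lit; case E: [seq c <- f | size c == 1] => [|[|k [|? ?]] ?] //= [<-] /allP sf.
have : [:: k] \in [seq c <- f | size c == 1] by rewrite E mem_head.
by rewrite mem_filter => /andP[_ /sf] /=; rewrite orbF.
Qed.

Lemma refute_sound n f s : refute n f -> ~~ cnf_sat s f.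
Proof.
elim: n f => [//|n IH] f /=; case: ifP => [/hasP[c cf /nilP c0] _|_].
  by apply/allP => /(_ c cf); rewrite c0.
case Eu: (unit_lit f) => [l|].
  by move/IH; apply: contra => sf; apply: assign_sat (unit_lit_sat Eu sf) sf.
case: f Eu => [|[|l c] f] // _; case: ifP => // /IH rl /IH rnl.
apply/negP => sf; have [sl|nsl] := boolP (lit_sat s l).
  by move/negP: rl; apply; apply: assign_sat.
by move/negP: rnl; apply; apply: assign_sat; rewrite ?lit_sat_neg.
Qed.

Lemma cnf_sat1 s c : cnf_sat s [:: c] = clause_sat s c.
Proof. by rewrite /cnf_sat /= andbT. Qed.

Lemma cnf_sat_catI s f1 f2 : cnf_sat s f1 -> cnf_sat s f2 -> cnf_sat s (f1 ++ f2).
Proof. by rewrite /cnf_sat all_cat => -> ->. Qed.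

Lemma cnf_sat_flatten s (fs : seq cnf) :
  (forall f, f \in fs -> cnf_sat s f) -> cnf_sat s (flatten fs).
Proof. by move=> sfs; apply/allP => c /flattenP[f /sfs /allP]; apply. Qed.

End Refutation.

Definition nonface_edges : seq (nat * nat) :=
  [:: (0, 3); (0, 6); (0, 7); (1, 2); (1, 5); (1, 7); (2, 4); (2, 6);
      (3, 4); (3, 5); (4, 7); (4, 8); (5, 6); (5, 8); (6, 8); (7, 8)].

Definition nonface_nat (u v : nat) : bool :=
  ((u, v) \in nonface_edges) || ((v, u) \in nonface_edges).

Definition nonface : rel 'I_9 := fun u v => nonface_nat u v.

(* AT u w v names P u w && Q w v, so that the factorization condition becomes a
   clause.  Vertices are nats: comparing ordinals under vm_compute is an order
   of magnitude slower. *)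
Inductive atom := AP of nat & nat | AQ of nat & nat | AT of nat & nat & nat.

Definition atom_eqb (a b : atom) : bool :=
  match a, b with
  | AP u v, AP u' v' | AQ u v, AQ u' v' => (u == u') && (v == v')
  | AT u w v, AT u' w' v' => [&& u == u', w == w' & v == v']
  | _, _ => false
  end.

Lemma atom_eqP : Equality.axiom atom_eqb.
Proof.
case=> [u v|u v|u w v] [u' v'|u' v'|u' w' v'] /=; try by constructor.
- by apply: (iffP andP) => [[/eqP-> /eqP->]|[-> ->]].
- by apply: (iffP andP) => [[/eqP-> /eqP->]|[-> ->]].
by apply: (iffP and3P) => [[/eqP-> /eqP-> /eqP->]|[-> -> ->]].
Qed.

HB.instance Definition _ := hasDecEq.Build atom atom_eqP.

Lemma nonface_inord u v : u < 9 -> v < 9 -> nonface (inord u) (inord v) = nonface_nat u v.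
Proof. by move=> ltu ltv; rewrite /nonface !inordK. Qed.

Lemma inord_eq u v : u < 9 -> v < 9 -> (inord u == inord v :> 'I_9) = (u == v).
Proof. by move=> ltu ltv; rewrite -(inj_eq val_inj) /= !inordK. Qed.

Lemma mem_iota9 u : (u \in iota 0 9) = (u < 9).
Proof. by rewrite mem_iota. Qed.

Definition atom_sat (P Q : rel 'I_9) (a : atom) : bool :=
  match a with
  | AP u v => P (inord u) (inord v)
  | AQ u v => Q (inord u) (inord v)
  | AT u w v => P (inord u) (inord w) && Q (inord w) (inord v)
  end.

Definition on_pairs (F : nat -> nat -> cnf atom) : cnf atom :=
  flatten [seq F u v | u <- iota 0 9, v <- iota 0 9].
Definition on_triples (F : nat -> nat -> nat -> cnf atom) : cnf atom :=
  flatten [seq on_pairs (F u) | u <- iota 0 9].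

Definition refl_clauses : cnf atom :=
  [seq [:: (AP u u, true)] | u <- iota 0 9] ++ [seq [:: (AQ u u, true)] | u <- iota 0 9].
Definition face_clauses u v w : cnf atom :=
  if (u != v) && ~~ nonface_nat u v then [:: [:: (AP u w, false); (AQ w v, false)]] else [::].
Definition nonface_clauses u v : cnf atom :=
  if nonface_nat u v then
    [:: [:: (AP u v, false); (AP v u, false)]; [:: (AP u v, false); (AQ v u, false)]]
  else [::].
(* Transitivity along paths of non-faces is all the refutation needs. *)
Definition trans_clauses u v w : cnf atom :=
  if nonface_nat u v && nonface_nat v w then
    [:: [:: (AP u v, false); (AP v w, false); (AP u w, true)];
        [:: (AQ u v, false); (AQ v w, false); (AQ u w, true)]]
  else [::].
Definition factor_def_clauses u v w : cnf atom :=
  if nonface_nat u v then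
    [:: [:: (AT u w v, false); (AP u w, true)]; [:: (AT u w v, false); (AQ w v, true)]]
  else [::].
Definition factor_clauses u v : cnf atom :=
  if nonface_nat u v && (u < v) then
    [:: [seq (AT u w v, true) | w <- iota 0 9] ++ [seq (AT v w u, true) | w <- iota 0 9]]
  else [::].

Definition orders_cnf : cnf atom :=
  refl_clauses ++ on_triples face_clauses ++ on_pairs nonface_clauses ++
  on_triples trans_clauses ++ on_triples factor_def_clauses ++ on_pairs factor_clauses.

Section OrdersCNF.
Variables P Q : rel 'I_9.
Hypothesis PQ : compatible_orders nonface P Q.
Let s := atom_sat P Q.

Lemma on_pairs_sat F :
  (forall u v, u < 9 -> v < 9 -> cnf_sat s (F u v)) -> cnf_sat s (on_pairs F).
Proof.
move=> sF; apply: cnf_sat_flatten => _ /allpairsP[[u v] [/= ui vi ->]].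
by apply: sF; rewrite -mem_iota9.
Qed.

Lemma on_triples_sat F :
  (forall u v w, u < 9 -> v < 9 -> w < 9 -> cnf_sat s (F u v w)) -> cnf_sat s (on_triples F).
Proof.
move=> sF; apply: cnf_sat_flatten => _ /mapP[u ui ->].
by apply: on_pairs_sat => v w; apply: sF; rewrite -mem_iota9.
Qed.

Lemma refl_clauses_sat : cnf_sat s refl_clauses.
Proof.
by apply: cnf_sat_catI; apply/allP => _ /mapP[u _ ->];
  rewrite /clause_sat /= lit_sat_true orbF /s /= ?(P_refl PQ) ?(Q_refl PQ).
Qed.

Lemma face_clauses_sat : cnf_sat s (on_triples face_clauses).
Proof.
apply: on_triples_sat => u v w ltu ltv ltw; rewrite /face_clauses; case: ifP => // /andP[ne nf].
rewrite /= andbT /clause_sat /= !lit_sat_false orbF -negb_and.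
by apply: (face_nofactor PQ); rewrite ?inord_eq ?nonface_inord.
Qed.

Lemma nonface_clauses_sat : cnf_sat s (on_pairs nonface_clauses).
Proof.
apply: on_pairs_sat => u v ltu ltv; rewrite /nonface_clauses; case: ifP => // nf.
have nf' : nonface (inord u) (inord v) by rewrite nonface_inord.
rewrite /= andbT /clause_sat /= !lit_sat_false !orbF -!negb_and.
by rewrite (nonface_antisym PQ nf') (nonface_kappa PQ nf').
Qed.

Lemma trans_clauses_sat : cnf_sat s (on_triples trans_clauses).
Proof.
apply: on_triples_sat => u v w ltu ltv ltw; rewrite /trans_clauses; case: ifP => // _.
rewrite /= andbT /clause_sat /= !lit_sat_false !lit_sat_true !orbF /s /= -!implybE.
by apply/andP; split; apply/implyP => le1; apply/implyP;
  [apply: P_trans PQ _ _ _ le1 | apply: Q_trans PQ _ _ _ le1].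
Qed.

Lemma factor_def_clauses_sat : cnf_sat s (on_triples factor_def_clauses).
Proof.
apply: on_triples_sat => u v w ltu ltv ltw; rewrite /factor_def_clauses; case: ifP => // _.
by rewrite /= andbT /clause_sat /= !lit_sat_false !lit_sat_true !orbF /s /=; case: (P _ _); case: (Q _ _).
Qed.

Lemma factor_clauses_sat : cnf_sat s (on_pairs factor_clauses).
Proof.
apply: on_pairs_sat => u v ltu ltv; rewrite /factor_clauses; case: ifP => // /andP[nf _].
have nf' : nonface (inord u) (inord v) by rewrite nonface_inord.
rewrite cnf_sat1 /clause_sat has_cat !has_map.
have witness a b (w : 'I_9) : P (inord a) w && Q w (inord b) ->
    has (preim (fun w => (AT a w b, true)) (lit_sat s)) (iota 0 9).
  by move=> Pw; apply/hasP; exists (val w); rewrite ?mem_iota9 //= /lit_sat /s /= inord_val eqb_id.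
by case: (nonface_factor PQ nf') => -[w /witness ->]; rewrite ?orbT.
Qed.

Lemma orders_cnf_sat : cnf_sat s orders_cnf.
Proof.
apply: (cnf_sat_catI refl_clauses_sat); apply: (cnf_sat_catI face_clauses_sat).
apply: (cnf_sat_catI nonface_clauses_sat); apply: (cnf_sat_catI trans_clauses_sat).
exact: (cnf_sat_catI factor_def_clauses_sat factor_clauses_sat).
Qed.

End OrdersCNF.

Lemma orders_cnf_refuted : refute 1000 orders_cnf.
Proof. by vm_compute. Qed.

Lemma no_compatible_orders (P Q : rel 'I_9) : ~ compatible_orders nonface P Q.
Proof.
by move=> PQ; have := refute_sound (atom_sat P Q) orders_cnf_refuted; rewrite orders_cnf_sat.
Qed.

(** * The lattice of closed sets *)

Local Open Scope order_scope.

(* Element i of L49 is the closed set closed_sets`_i of a closure system on the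
   points 0, ..., 9, listed by increasing size; the join-irreducibles are the
   closures of the points, and X consists of those of 0, ..., 8. *)
Definition closed_sets : seq (seq nat) :=
  [:: [::];
      [:: 0]; [:: 4]; [:: 5];
      [:: 0; 4]; [:: 2; 4]; [:: 0; 5]; [:: 1; 5]; [:: 4; 5];
      [:: 0; 1; 5]; [:: 0; 4; 5]; [:: 1; 4; 5]; [:: 0; 5; 6]; [:: 4; 5; 8];
      [:: 0; 4; 9];
      [:: 0; 1; 4; 5]; [:: 1; 2; 4; 5]; [:: 0; 3; 4; 5]; [:: 0; 1; 5; 6];
      [:: 0; 4; 5; 6]; [:: 1; 4; 5; 8]; [:: 0; 2; 4; 9]; [:: 0; 4; 7; 9];
      [:: 0; 1; 3; 4; 5]; [:: 0; 1; 4; 5; 6]; [:: 0; 3; 4; 5; 6];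
      [:: 1; 2; 4; 5; 8]; [:: 0; 4; 5; 6; 8]; [:: 0; 1; 4; 5; 9];
      [:: 0; 2; 4; 7; 9];
      [:: 0; 1; 3; 4; 5; 6]; [:: 0; 1; 4; 5; 6; 8]; [:: 0; 3; 4; 5; 6; 8];
      [:: 0; 1; 3; 4; 5; 9]; [:: 0; 1; 4; 5; 6; 9]; [:: 0; 1; 4; 5; 7; 9];
      [:: 0; 1; 3; 4; 5; 6; 8]; [:: 0; 1; 2; 4; 5; 6; 9];
      [:: 0; 1; 3; 4; 5; 6; 9]; [:: 0; 1; 3; 4; 5; 7; 9];
      [:: 0; 1; 4; 5; 6; 7; 9];
      [:: 0; 1; 2; 3; 4; 5; 6; 9]; [:: 0; 1; 2; 4; 5; 6; 7; 9];
      [:: 0; 1; 3; 4; 5; 6; 7; 9]; [:: 0; 1; 4; 5; 6; 7; 8; 9];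
      [:: 0; 1; 2; 3; 4; 5; 6; 7; 9]; [:: 0; 1; 2; 4; 5; 6; 7; 8; 9];
      [:: 0; 1; 3; 4; 5; 6; 7; 8; 9];
      [:: 0; 1; 2; 3; 4; 5; 6; 7; 8; 9]].

(* ord_enum does not reduce under vm_compute: insub goes through the opaque idP. *)
Definition ord_seq n : seq 'I_n.+1 := [seq inZp i | i <- iota 0 n.+1].

Lemma mem_ord_seq n (x : 'I_n.+1) : x \in ord_seq n.
Proof. by apply/mapP; exists (val x); rewrite ?valZpK // mem_iota add0n ltn_ord. Qed.

Lemma all_ord_seqP n (p : pred 'I_n.+1) : reflect (forall x, p x) (all p (ord_seq n)).
Proof. by apply: (iffP allP) => [px x|px x _]; [apply: px; apply: mem_ord_seq | apply: px]. Qed.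

Lemma uniq_ord_seq n : uniq (ord_seq n).
Proof.
rewrite map_inj_in_uniq ?iota_uniq // => i k; rewrite !mem_iota !add0n => /andP[_ lti] /andP[_ ltk].
by move/(congr1 val); rewrite /= !modn_small.
Qed.

(* As closed_sets is sorted by size, the first closed superset of A is its
   closure; the tables are trusted only through the checks that follow. *)
Definition least_closed (A : seq nat) : nat := find (fun C => all (mem C) A) closed_sets.

Definition le_table : seq (seq bool) := Eval vm_compute in
  [seq [seq all (mem B) A | B <- closed_sets] | A <- closed_sets].

Definition meet_table : seq (seq nat) := Eval vm_compute in
  [seq [seq least_closed [seq p <- A | p \in B] | B <- closed_sets] | A <- closed_sets].

Definition join_table : seq (seq nat) := Eval vm_compute in
  [seq [seq least_closed (A ++ B) | B <- closed_sets] | A <- closed_sets].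

Definition leN (i j : nat) : bool := nth false (nth [::] le_table i) j.
Definition meetN (i j : nat) : nat := nth 0 (nth [::] meet_table i) j.
Definition joinN (i j : nat) : nat := nth 0 (nth [::] join_table i) j.

Definition all_pairs49 (p : nat -> nat -> bool) : bool :=
  all (fun i => all (p i) (iota 0 49)) (iota 0 49).
Definition all_triples49 (p : nat -> nat -> nat -> bool) : bool :=
  all (fun i => all_pairs49 (p i)) (iota 0 49).

Lemma mem_iota_ord n (x : 'I_n) : val x \in iota 0 n.
Proof. by rewrite mem_iota add0n ltn_ord. Qed.

Lemma all_pairs49P p : all_pairs49 p -> forall x y : 'I_49, p x y.
Proof. by move=> /allP pP x y; apply: (allP (pP x (mem_iota_ord x))) (mem_iota_ord y). Qed.

Lemma all_triples49P p : all_triples49 p -> forall x y z : 'I_49, p x y z.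
Proof. by move=> /allP pP x; apply: all_pairs49P (pP x (mem_iota_ord x)). Qed.

Fact le_refl_check : all (fun i => leN i i) (iota 0 49).
Proof. by vm_compute. Qed.

Fact le_anti_check : all_pairs49 (fun i j => leN i j && leN j i ==> (i == j)).
Proof. by vm_compute. Qed.

Fact le_trans_check : all_triples49 (fun i j k => leN i j && leN j k ==> leN i k).
Proof. by vm_compute. Qed.

Fact bounds_check : all_pairs49 (fun i j => (meetN i j < 49) && (joinN i j < 49)).
Proof. by vm_compute. Qed.

Fact meet_check : all_triples49 (fun i j k => leN i (meetN j k) == leN i j && leN i k).
Proof. by vm_compute. Qed.

Fact join_check : all_triples49 (fun i j k => leN (joinN i j) k == leN i k && leN j k).
Proof. by vm_compute. Qed.

Fact bottom_top_check : all (fun i => leN 0 i && leN i 48) (iota 0 49).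
Proof. by vm_compute. Qed.

Definition L49 : Type := 'I_49.
HB.instance Definition _ := Finite.on L49.

Definition leL (x y : L49) : bool := leN x y.
Definition meetL (x y : L49) : L49 := inZp (meetN x y).
Definition joinL (x y : L49) : L49 := inZp (joinN x y).

Lemma val_meetL (x y : L49) : val (meetL x y) = meetN x y.
Proof. by rewrite /= modn_small //; case/andP: (all_pairs49P bounds_check x y). Qed.

Lemma val_joinL (x y : L49) : val (joinL x y) = joinN x y.
Proof. by rewrite /= modn_small //; case/andP: (all_pairs49P bounds_check x y). Qed.

Lemma leL_refl : reflexive leL.
Proof. by move=> x; apply: (allP le_refl_check _ (mem_iota_ord x)). Qed.

Lemma leL_anti : antisymmetric leL.
Proof. by move=> x y /(implyP (all_pairs49P le_anti_check x y)) /eqP /val_inj. Qed.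

Lemma leL_trans : transitive leL.
Proof.
by move=> y x z xy yz; apply: (implyP (all_triples49P le_trans_check x y z)); apply/andP.
Qed.

Fact L49_display : Order.disp_t. Proof. exact: Order.Disp tt tt. Qed.
HB.instance Definition _ :=
  Order.Le_isPOrder.Build L49_display L49 leL_refl leL_anti leL_trans.

Lemma meetLP (x y z : L49) : (x <= meetL y z) = (x <= y) && (x <= z).
Proof. by have /eqP := all_triples49P meet_check x y z; rewrite -val_meetL. Qed.

Lemma joinLP (x y z : L49) : (joinL x y <= z) = (x <= z) && (y <= z).
Proof. by have /eqP := all_triples49P join_check x y z; rewrite -val_joinL. Qed.

HB.instance Definition _ :=
  Order.POrder_MeetJoin_isLattice.Build L49_display L49 meetLP joinLP.

Definition botL : L49 := inZp 0.
Definition topL : L49 := inZp 48.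

Lemma le0L (x : L49) : botL <= x.
Proof. by case/andP: (allP bottom_top_check _ (mem_iota_ord x)). Qed.

Lemma leL1 (x : L49) : x <= topL.
Proof. by case/andP: (allP bottom_top_check _ (mem_iota_ord x)). Qed.

HB.instance Definition _ := Order.hasBottom.Build L49_display L49 le0L.
HB.instance Definition _ := Order.hasTop.Build L49_display L49 leL1.

Fact join_sd_check : all_triples49 (fun i j k =>
  (joinN i j == joinN i k) ==> (joinN i (meetN j k) == joinN i j)).
Proof. by vm_compute. Qed.

Fact meet_sd_check : all_triples49 (fun i j k =>
  (meetN i j == meetN i k) ==> (meetN i (joinN j k) == meetN i j)).
Proof. by vm_compute. Qed.

Lemma L49_semidistributive : semidistributive L49.
Proof.
split=> x y z /(congr1 val) e; apply: val_inj; move: e.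
  rewrite !val_joinL val_meetL => /eqP e; apply/eqP.
  exact: (implyP (all_triples49P join_sd_check x y z) e).
rewrite !val_meetL val_joinL => /eqP e; apply/eqP.
exact: (implyP (all_triples49P meet_sd_check x y z) e).
Qed.

Definition elements : seq L49 := ord_seq 48.

Lemma forall_elements (p : pred L49) : [forall x, p x] = all p elements.
Proof. exact/forallP/all_ord_seqP. Qed.

Lemma card_elements (p : pred L49) : #|[set x | p x]| = count p elements.
Proof.
rewrite cardsE cardE -size_filter; apply/perm_size/uniq_perm.
- exact: enum_uniq.
- exact/filter_uniq/uniq_ord_seq.
by move=> x; rewrite mem_enum mem_filter mem_ord_seq andbT.
Qed.

(* [forall] does not reduce (the cardinal is locked), hence list versions. *)
Definition join_irr_enum (j : L49) : bool :=
  (j != \bot) &&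
  all (fun a => all (fun b => (j == a `|` b) ==> (j == a) || (j == b)) elements) elements.

Definition meet_irr_enum (m : L49) : bool :=
  (m != \top) &&
  all (fun a => all (fun b => (m == a `&` b) ==> (m == a) || (m == b)) elements) elements.

Definition covers_enum (y x : L49) : bool :=
  (y < x) && all (fun z => ~~ ((y < z) && (z < x))) elements.

Lemma join_irrE (j : L49) : join_irr j = join_irr_enum j.
Proof. by rewrite /join_irr forall_elements; under eq_all do rewrite forall_elements. Qed.

Lemma meet_irrE (m : L49) : meet_irr m = meet_irr_enum m.
Proof. by rewrite /meet_irr forall_elements; under eq_all do rewrite forall_elements. Qed.

Lemma coversE (y x : L49) : covers y x = covers_enum y x.
Proof. by rewrite /covers forall_elements. Qed.

Lemma card_JI : #|JI L49| = 10.
Proof. by rewrite card_elements (eq_count join_irrE); vm_compute. Qed.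

Lemma card_MI : #|MI L49| = 10.
Proof. by rewrite card_elements (eq_count meet_irrE); vm_compute. Qed.

Definition long_chain : seq L49 := [seq inZp i | i <- [:: 0; 1; 6; 9; 15; 24; 34; 37; 41; 45; 48]].

Lemma long_chain_is_chain : is_chain [set x in long_chain].
Proof.
have comp : all (fun x => all (fun y => (x <= y) || (y <= x)) long_chain) long_chain by vm_compute.
apply/forallP => x; apply/implyP; rewrite inE => xc.
apply/forallP => y; apply/implyP; rewrite inE => yc.
exact: (allP (allP comp x xc) y yc).
Qed.

Lemma L49_extremal : extremal L49.
Proof.
have len : lattice_length L49 = 10.
  apply/eqP; rewrite eqn_leq -{1}card_JI lattice_length_le_card_JI /=.
  have chain_card : #|[set x in long_chain]| = 11 by rewrite cardsE (card_uniqP _); vm_compute.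
  by have := chain_card_le_length long_chain_is_chain; rewrite chain_card.
by rewrite /extremal len card_JI card_MI.
Qed.

Definition point (p : nat) : L49 := inZp (least_closed [:: p]).
Definition point_lower (p : nat) : L49 :=
  inZp (least_closed (rem p (nth [::] closed_sets (least_closed [:: p])))).

Definition X : {set L49} := [set point u | u : 'I_9].

Fact point_check :
  all (fun u : 'I_9 => join_irr_enum (point u) && covers_enum (point_lower u) (point u)) (ord_seq 8).
Proof. by vm_compute. Qed.

Fact point_inj_check : all (fun u : 'I_9 => all (fun v : 'I_9 => (point u == point v) ==> (u == v))
  (ord_seq 8)) (ord_seq 8).
Proof. by vm_compute. Qed.

Fact point_pair_check : all (fun u : 'I_9 => all (fun v : 'I_9 => (u != v) ==>
  ((~~ (point v <= point u `|` point_lower v)) && ~~ (point u <= point v `|` point_lower u)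
   == ~~ nonface u v)) (ord_seq 8)) (ord_seq 8).
Proof. by vm_compute. Qed.

Fact nonface_irr_check : all (fun u : 'I_9 => ~~ nonface u u) (ord_seq 8).
Proof. by vm_compute. Qed.

Lemma point_join_irr (u : 'I_9) : join_irr (point u).
Proof. by have /all_ord_seqP/(_ u)/andP[] := point_check; rewrite join_irrE. Qed.

Lemma point_covers (u : 'I_9) : covers (point_lower u) (point u).
Proof. by have /all_ord_seqP/(_ u)/andP[_] := point_check; rewrite -coversE. Qed.

Lemma point_inj : injective (fun u : 'I_9 => point u).
Proof.
move=> u v /eqP puv; apply/eqP.
by have /all_ord_seqP/(_ u)/all_ord_seqP/(_ v)/implyP := point_inj_check; apply.
Qed.

Lemma nonface_irr : irreflexive nonface.
Proof. by move=> u; apply/negbTE; have /all_ord_seqP := nonface_irr_check; apply. Qed.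

Lemma X_sub_JI : X \subset JI L49.
Proof. by apply/subsetP => _ /imsetP[u _ ->]; rewrite inE point_join_irr. Qed.

Lemma point_pairE (u v : 'I_9) : u != v ->
  ([set point u; point v] \in canonical_join_complex L49) = ~~ nonface u v.
Proof.
move=> ne_uv; have ne_p : point u != point v by rewrite (inj_eq point_inj).
rewrite (canonical_join_pair_coversE L49_semidistributive (point_join_irr u) (point_join_irr v) ne_p
  (point_covers u) (point_covers v)).
by have /all_ord_seqP/(_ u)/all_ord_seqP/(_ v)/implyP/(_ ne_uv)/eqP := point_pair_check.
Qed.

Lemma X_not_canonical_join_complex (d' : Order.disp_t) (L' : finTBLatticeType d') :
  semidistributive L' -> ~ complex_iso (induced_subcomplex X) (canonical_join_complex L').
Proof.
move=> SD' [f []]; rewrite induced_subcomplex_vertices ?X_sub_JI // canonical_join_complex_vertices.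
move=> f_inj f_onto f_faces; pose j (u : 'I_9) := f (point u).
have pX (u : 'I_9) : point u \in X by apply/imsetP; exists u.
apply: (@no_compatible_orders (fun u v => j v <= j u) (fun u v => kappa (j v) <= kappa (j u))).
apply: (kappa_compatible_orders (N := nonface) (j := j) SD') => [|u v|u|w jw|u v ne_uv].
- exact: nonface_irr.
- by move/f_inj => /(_ (pX u) (pX v)) /point_inj.
- by have := imset_f f (pX u); rewrite f_onto inE.
- have : w \in f @: X by rewrite f_onto inE.
  by case/imsetP => _ /imsetP[u _ ->] ->; exists u.
have sub : [set point u; point v] \subset X by apply/subsetP => x /set2P[] ->.
have -> : [set j u; j v] = f @: [set point u; point v] by rewrite imsetU1 imset_set1.
by rewrite -(f_faces _ sub) in_set sub andbT (point_pairE ne_uv).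
Qed.

Theorem mainTheorem14 :
  exists (d : Order.disp_t) (L : finTBLatticeType d) (X : {set L}),
    [/\ semidistributive L, extremal L, X \subset JI L &
        forall (d' : Order.disp_t) (L' : finTBLatticeType d'),
          semidistributive L' ->
          ~ complex_iso (induced_subcomplex X) (canonical_join_complex L')].
Proof.
exists L49_display, L49, X; split.
- exact: L49_semidistributive.
- exact: L49_extremal.
- exact: X_sub_JI.
exact: X_not_canonical_join_complex.
Qed.
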